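(* Consider the airfoil system $\ddot x_1+2G^1(x,\dot x)=0$, $\ddot x_2+2G^2(x,\dot x)=0$ with $y_i=\dot x_i$, $$G^1=\frac{6V^2M^2x_2^3-6000Mx_2^3+30V^2x_2+30V^2y_1+19V^2y_2+240VMy_1-60VMy_2+1200Mx_1-300Mx_2}{2100V^2M},$$ $$G^2=-\frac{18V^2M^2x_2^3-60000Mx_2^3+90V^2x_2+90V^2y_1+85V^2y_2+300VMy_1-600VMy_2+1500Mx_1-3000Mx_2}{5250V^2M},$$ where $M=M_\infty>0$ and $V>0$ are real parameters. Define $R_1=-9450V^2M-43V^2+135VM+621900M^2$, $R_2=1800V^4M+1500V^3M^2-15660000V^2M^3+4V^4+20V^3M-123675V^2M^2+297000VM^3+769590000M^4$, $R_3=-V^2+50M$, $R_4=V^2M-5000$, $R_5=-18900V^4M^2+43V^4M-135V^3M^2+795600V^2M^3+47250000V^2M-215000V^2+675000VM-1615500000M^2$, $R_6=3600V^6M^2+3000V^5M^3-31320000V^4M^4-4V^6M-20V^5M^2-146325V^4M^3-522000V^3M^4+1579410000V^2M^5-4500000V^4M-532500000V^3M^2+155250000000V^2M^3+20000V^4+100000V^3M+56625000V^2M^2+28485000000VM^3-7829550000000M^4$, and assume the genericity condition $(M-10)R_1R_2R_3R_4R_5R_6\neq0$. Then: (a) the system has exactly one Jacobi stable fixed point if and only if one of the following holds: (i) $R_1>0,R_2>0,R_4>0,R_5>0,R_6>0$; (ii) $R_1>0,R_2>0,R_3>0,R_4<0$; (iii) $R_1>0,R_2>0,R_3>0,R_4>0,R_5<0,R_6>0$;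 (b) the system has exactly two Jacobi stable fixed points if and only if one of the following holds: (i) $R_1<0,R_3<0,R_4<0,R_5>0,R_6>0$; (ii) $R_1>0,R_2<0,R_3<0,R_4<0,R_5>0,R_6>0$.
   Context: This is the dimensionless aeroelastic airfoil model with cubic pitching nonlinearity in supersonic flow ($x_1$ plunge, $x_2$ pitch, $M_\infty$ the flight Mach number, $V$ a dimensionless velocity), after fixing the remaining airfoil constants. Fixed points are points $(x_1,x_2)\in\mathbb{R}^2$ with $G^1(x,0)=G^2(x,0)=0$. Einstein summation is used; $N^i_j=\partial G^i/\partial y_j$, $G^i_{j\ell}=\partial N^i_j/\partial y_\ell$, and the deviation curvature tensor is $P^i_j=-2\frac{\partial G^i}{\partial x_j}-2G^\ell G^i_{j\ell}+y_\ell\frac{\partial N^i_j}{\partial x_\ell}+N^i_\ell N^\ell_j$. A fixed point $\bar x$ is Jacobi stable if all eigenvalues of the $2\times 2$ matrix $(P^i_j)$ evaluated at $(x,y)=(\bar x,0)$ have strictly negative real parts. *)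

From Stdlib Require Import Reals.
From Coquelicot Require Import Coquelicot.
Open Scope R_scope.

(* Points of R^2; index 0 stands for coordinate 1, index 1 for coordinate 2. *)
Definition vec := (R * R)%type.
Definition vget (v : vec) (i : nat) : R := if Nat.eqb i 0 then fst v else snd v.
Definition vset (v : vec) (i : nat) (t : R) : vec :=
  if Nat.eqb i 0 then (t, snd v) else (fst v, t).

Definition sum2 (f : nat -> R) : R := f 0%nat + f 1%nat.

Definition G1 (M V : R) (x y : vec) : R :=
  let x1 := fst x in let x2 := snd x in let y1 := fst y in let y2 := snd y in
  (6*V^2*M^2*x2^3 - 6000*M*x2^3 + 30*V^2*x2 + 30*V^2*y1 + 19*V^2*y2
   + 240*V*M*y1 - 60*V*M*y2 + 1200*M*x1 - 300*M*x2) / (2100*V^2*M).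

Definition G2 (M V : R) (x y : vec) : R :=
  let x1 := fst x in let x2 := snd x in let y1 := fst y in let y2 := snd y in
  - ((18*V^2*M^2*x2^3 - 60000*M*x2^3 + 90*V^2*x2 + 90*V^2*y1 + 85*V^2*y2
      + 300*V*M*y1 - 600*V*M*y2 + 1500*M*x1 - 3000*M*x2) / (5250*V^2*M)).

Definition G (M V : R) (i : nat) (x y : vec) : R :=
  if Nat.eqb i 0 then G1 M V x y else G2 M V x y.

Definition dx (f : vec -> vec -> R) (j : nat) (x y : vec) : R :=
  Derive (fun t => f (vset x j t) y) (vget x j).
Definition dy (f : vec -> vec -> R) (j : nat) (x y : vec) : R :=
  Derive (fun t => f x (vset y j t)) (vget y j).

Definition N (M V : R) (i j : nat) (x y : vec) : R := dy (G M V i) j x y.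
Definition G3 (M V : R) (i j l : nat) (x y : vec) : R := dy (N M V i j) l x y.

Definition P (M V : R) (i j : nat) (x y : vec) : R :=
  - 2 * dx (G M V i) j x y
  - 2 * sum2 (fun l => G M V l x y * G3 M V i j l x y)
  + sum2 (fun l => vget y l * dx (N M V i j) l x y)
  + sum2 (fun l => N M V i l x y * N M V l j x y).

Definition fixed_point (M V : R) (x : vec) : Prop :=
  G M V 0 x (0, 0) = 0 /\ G M V 1 x (0, 0) = 0.

Definition eigenvalue2 (A : nat -> nat -> R) (lam : C) : Prop :=
  ((RtoC (A 0%nat 0%nat) - lam) * (RtoC (A 1%nat 1%nat) - lam)
   - RtoC (A 0%nat 1%nat) * RtoC (A 1%nat 0%nat))%C = RtoC 0.

Definition jacobi_stable (M V : R) (xb : vec) : Prop :=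
  forall lam : C, eigenvalue2 (fun i j => P M V i j xb (0, 0)) lam -> Re lam < 0.

Definition jacobi_stable_fp (M V : R) (x : vec) : Prop :=
  fixed_point M V x /\ jacobi_stable M V x.

Definition exactly_one (Q : vec -> Prop) : Prop :=
  exists a, Q a /\ forall b, Q b -> b = a.
Definition exactly_two (Q : vec -> Prop) : Prop :=
  exists a b, a <> b /\ Q a /\ Q b /\ forall c, Q c -> c = a \/ c = b.

Definition Rpoly1 (M V : R) := -9450*V^2*M - 43*V^2 + 135*V*M + 621900*M^2.
Definition Rpoly2 (M V : R) := 1800*V^4*M + 1500*V^3*M^2 - 15660000*V^2*M^3 + 4*V^4
  + 20*V^3*M - 123675*V^2*M^2 + 297000*V*M^3 + 769590000*M^4.
Definition Rpoly3 (M V : R) := - V^2 + 50*M.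
Definition Rpoly4 (M V : R) := V^2*M - 5000.
Definition Rpoly5 (M V : R) := -18900*V^4*M^2 + 43*V^4*M - 135*V^3*M^2 + 795600*V^2*M^3
  + 47250000*V^2*M - 215000*V^2 + 675000*V*M - 1615500000*M^2.
Definition Rpoly6 (M V : R) := 3600*V^6*M^2 + 3000*V^5*M^3 - 31320000*V^4*M^4 - 4*V^6*M
  - 20*V^5*M^2 - 146325*V^4*M^3 - 522000*V^3*M^4 + 1579410000*V^2*M^5
  - 4500000*V^4*M - 532500000*V^3*M^2 + 155250000000*V^2*M^3 + 20000*V^4
  + 100000*V^3*M + 56625000*V^2*M^2 + 28485000000*V*M^3 - 7829550000000*M^4.

From Pilot Require Import Defs.
From Stdlib Require Import Reals Lra Psatz.
From Coquelicot Require Import Coquelicot.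
From Stdlib Require Import List.
Import ListNotations.
Open Scope R_scope.

(* At rest (y = 0) the velocity derivatives of the spray are constant, so the deviation curvature
   (P^i_j)(x,0) = -2 dG^i/dx_j + N^i_l N^l_j depends only on the pitch x2, and a real 2x2 matrix
   has its eigenvalues in the open left half-plane iff its trace is negative and its determinant
   positive. The fixed points are the origin and, when pitch_sq = 5 R3 / (M R4) is positive, the
   pair x2 = +-sqrt pitch_sq. Up to positive factors, the trace and determinant of P are -R1 and
   R2 at the origin and R5 R4 and -R6 R4 at the pitched pair, so the origin is stable iff
   R1, R2 > 0, and the pair is present and stable iff R3 R4 > 0, R5 R4 < 0, R6 R4 < 0. The stated
   sign patterns then follow from two polynomial implications, R1, R2 > 0 => R3 > 0 and
   R3, R4 > 0 => R6 > 0, proved by explicit positivity certificates. *)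

Definition tr2 (A : nat -> nat -> R) : R := A 0%nat 0%nat + A 1%nat 1%nat.
Definition det2 (A : nat -> nat -> R) : R :=
  A 0%nat 0%nat * A 1%nat 1%nat - A 0%nat 1%nat * A 1%nat 0%nat.

Lemma eigenvalue2_iff (A : nat -> nat -> R) (x y : R) :
  eigenvalue2 A (x, y) <-> x ^ 2 - tr2 A * x + det2 A = y ^ 2 /\ y * (tr2 A - 2 * x) = 0.
Proof.
  unfold eigenvalue2, tr2, det2, Cminus, Cmult, Cplus, Copp, RtoC; simpl.
  split; [intros H; injection H as H1 H2; split; lra | intros [H1 H2]; f_equal; lra].
Qed.

Lemma eigenvalue2_Re_neg_iff (A : nat -> nat -> R) :
  (forall lam : C, eigenvalue2 A lam -> Re lam < 0) <-> tr2 A < 0 /\ 0 < det2 A.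
Proof.
  split.
  - intros H. remember (tr2 A ^ 2 - 4 * det2 A) as disc eqn:Hdisc.
    destruct (Rle_lt_dec 0 disc) as [hdisc|hdisc].
    + pose proof (sqrt_sqrt disc hdisc) as hs; pose proof (sqrt_pos disc).
      assert (Hre : Re ((tr2 A + sqrt disc) / 2, 0) < 0).
      { apply H, eigenvalue2_iff. split; [lra | ring]. }
      simpl in Hre. split; nra.
    + assert (hdisc' : 0 <= - disc) by lra. pose proof (sqrt_sqrt (- disc) hdisc') as hs.
      assert (Hre : Re (tr2 A / 2, sqrt (- disc) / 2) < 0).
      { apply H, eigenvalue2_iff. split; [lra | field]. }
      simpl in Hre. split; nra.
  - intros [ht hd] [x y] Hev. apply eigenvalue2_iff in Hev as [Hre Him].
    simpl. destruct (Rmult_integral _ _ Him) as [->|Hx]; nra.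
Qed.

Lemma Rdiv_pos_iff (a k : R) : 0 < k -> 0 < a / k <-> 0 < a.
Proof.
  intros hk. split; intros h.
  - replace a with (a / k * k) by (field; lra). nra.
  - now apply Rdiv_lt_0_compat.
Qed.

Lemma Rdiv_neg_iff (a k : R) : 0 < k -> a / k < 0 <-> a < 0.
Proof.
  intros hk. split; intros h.
  - replace a with (a / k * k) by (field; lra). nra.
  - unfold Rdiv. pose proof (Rinv_0_lt_compat k hk). nra.
Qed.

Lemma Rdiv_eq0_iff (a k : R) : k <> 0 -> a / k = 0 <-> a = 0.
Proof.
  intros hk. split; intros h; [|rewrite h; unfold Rdiv; ring].
  replace a with (a / k * k) by (field; exact hk). rewrite h; ring.
Qed.

Lemma pow2_pos (x : R) : x <> 0 -> 0 < x ^ 2.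
Proof. intros hx. destruct (Rdichotomy _ _ hx); nra. Qed.

Lemma pow2_eq_iff (x s : R) : 0 <= s -> x ^ 2 = s <-> x = sqrt s \/ x = - sqrt s.
Proof.
  intros hs. pose proof (sqrt_sqrt s hs). split.
  - intros hx. assert (h : (x - sqrt s) * (x + sqrt s) = 0) by nra.
    destruct (Rmult_integral _ _ h); [left | right]; lra.
  - intros [-> | ->]; nra.
Qed.

Lemma Rmult_pos_iff (a b : R) : 0 < a * b <-> (0 < a /\ 0 < b) \/ (a < 0 /\ b < 0).
Proof.
  split; [|intros [[] | []]; nra].
  intros h. destruct (Rtotal_order a 0) as [|[->|]], (Rtotal_order b 0) as [|[->|]]; nra.
Qed.

Lemma Rmult_neg_iff (a b : R) : a * b < 0 <-> (0 < a /\ b < 0) \/ (a < 0 /\ 0 < b).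
Proof.
  split; [|intros [[] | []]; nra].
  intros h. destruct (Rtotal_order a 0) as [|[->|]], (Rtotal_order b 0) as [|[->|]]; nra.
Qed.

Lemma Rsign_cases (r : R) : r <> 0 -> (r < 0 /\ ~ 0 < r) \/ (0 < r /\ ~ r < 0).
Proof. intros h. destruct (Rdichotomy _ _ h); [left | right]; split; lra. Qed.

Ltac pos_factors :=
  repeat match goal with |- 0 < _ * _ => apply Rmult_lt_0_compat end; auto using pow_lt; lra.

Section Counting.
Variables (Q : vec -> Prop) (o p q : vec) (A B : Prop).
Hypothesis distinct : B -> p <> q /\ p <> o /\ q <> o.
Hypothesis HQ : forall x, Q x <-> (x = o /\ A) \/ (B /\ (x = p \/ x = q)).

Lemma exactly_one_cases : exactly_one Q <-> A /\ ~ B.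
Proof.
  split.
  - intros [a [Qa Huniq]]. assert (nB : ~ B).
    { intros hB. destruct (distinct hB) as [hpq _].
      apply hpq. rewrite (Huniq p), (Huniq q); auto; apply HQ; auto. }
    split; [|exact nB]. apply HQ in Qa as [[_ hA] | [hB _]]; tauto.
  - intros [hA nB]. exists o. split; [apply HQ; auto|].
    intros b Qb. apply HQ in Qb as [[-> _] | [hB _]]; tauto.
Qed.

Lemma exactly_two_cases : exactly_two Q <-> ~ A /\ B.
Proof.
  split.
  - intros [a [b [hab [Qa [Qb Hall]]]]]. assert (hB : B).
    { apply HQ in Qa as [[-> _] | [hB _]]; [|exact hB].
      apply HQ in Qb as [[-> _] | [hB _]]; [contradiction | exact hB]. }
    split; [|exact hB]. intros hA. destruct (distinct hB) as [hpq [hpo hqo]].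
    destruct (Hall o), (Hall p), (Hall q); try (apply HQ; auto); congruence.
  - intros [nA hB]. destruct (distinct hB) as [hpq _].
    exists p, q. repeat split; try (apply HQ; auto); [exact hpq|].
    intros c Qc. apply HQ in Qc as [[_ hA] | [_ hc]]; tauto.
Qed.

End Counting.

(* The spray is affine in y: N^i_j is constant and G^i_{jl} vanishes. *)
Definition Ncoef (M V : R) (i j : nat) : R :=
  match i, j with
  | O, O => (30*V^2 + 240*V*M) / (2100*V^2*M)
  | O, _ => (19*V^2 - 60*V*M) / (2100*V^2*M)
  | _, O => - ((90*V^2 + 300*V*M) / (5250*V^2*M))
  | _, _ => - ((85*V^2 - 600*V*M) / (5250*V^2*M))
  end.

Definition dGdx_rest (M V x2 : R) (i j : nat) : R :=
  match i, j with
  | O, O => 1200*M / (2100*V^2*M)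
  | O, _ => (18*V^2*M^2*x2^2 - 18000*M*x2^2 + 30*V^2 - 300*M) / (2100*V^2*M)
  | _, O => - (1500*M / (5250*V^2*M))
  | _, _ => - ((54*V^2*M^2*x2^2 - 180000*M*x2^2 + 90*V^2 - 3000*M) / (5250*V^2*M))
  end.

Definition Prest (M V x2 : R) (i j : nat) : R :=
  -2 * dGdx_rest M V x2 i j + (Ncoef M V i 0 * Ncoef M V 0 j + Ncoef M V i 1 * Ncoef M V 1 j).

Definition plunge_of_pitch (M V x2 : R) : R :=
  - (6*V^2*M^2*x2^3 - 6000*M*x2^3 + 30*V^2*x2 - 300*M*x2) / (1200*M).

Definition pitch_sq (M V : R) : R := 5 * Rpoly3 M V / (M * Rpoly4 M V).

Definition rest_point (M V x2 : R) : vec := (plunge_of_pitch M V x2, x2).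

Lemma rest_point_inj (M V x y : R) : rest_point M V x = rest_point M V y -> x = y.
Proof. now injection 1. Qed.

Definition origin_stable (M V : R) : Prop := 0 < Rpoly1 M V /\ 0 < Rpoly2 M V.

Definition pitched_stable (M V : R) : Prop :=
  0 < Rpoly3 M V * Rpoly4 M V /\ Rpoly5 M V * Rpoly4 M V < 0 /\ Rpoly6 M V * Rpoly4 M V < 0.

Section Airfoil.
Variables (M V : R).
Hypotheses (hM : 0 < M) (hV : 0 < V).

Lemma N_eq (i j : nat) (x y : vec) : Defs.N M V i j x y = Ncoef M V i j.
Proof.
  unfold Defs.N, dy, Defs.G, vset, vget. destruct x as [x1 x2], y as [y1 y2].
  destruct i as [|i], j as [|j]; simpl; apply is_derive_unique; unfold G1, G2; simpl;
    auto_derive; first [exact I | unfold Rdiv; ring].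
Qed.

Lemma G3_eq (i j l : nat) (x y : vec) : G3 M V i j l x y = 0.
Proof.
  unfold G3, dy. rewrite (Derive_ext _ (fun _ => Ncoef M V i j)); [apply Derive_const|].
  intros t. apply N_eq.
Qed.

Lemma dx_G_rest (i j : nat) (x1 x2 : R) :
  dx (Defs.G M V i) j (x1, x2) (0, 0) = dGdx_rest M V x2 i j.
Proof.
  unfold dx, Defs.G, vset, vget.
  destruct i as [|i], j as [|j]; simpl; apply is_derive_unique; unfold G1, G2; simpl;
    auto_derive; first [exact I | unfold Rdiv; ring].
Qed.

Lemma P_rest (i j : nat) (x1 x2 : R) : Defs.P M V i j (x1, x2) (0, 0) = Prest M V x2 i j.
Proof.
  unfold Defs.P, Prest, sum2. rewrite !G3_eq, !N_eq, dx_G_rest.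
  cbn [vget fst snd Nat.eqb]; ring.
Qed.

Lemma G1_rest (x1 x2 : R) :
  Defs.G M V 0 (x1, x2) (0, 0) = 4 * (x1 - plunge_of_pitch M V x2) / (7 * V ^ 2).
Proof. unfold Defs.G, G1, plunge_of_pitch; simpl. field; lra. Qed.

(* [G^2 + G^1 / 2] no longer involves x1. *)
Lemma G2_rest (x1 x2 : R) : Rpoly4 M V <> 0 ->
  Defs.G M V 1 (x1, x2) (0, 0) = - Defs.G M V 0 (x1, x2) (0, 0) / 2
    - Rpoly4 M V * x2 * (x2 ^ 2 - pitch_sq M V) / (500 * V ^ 2).
Proof. intros h4. unfold Defs.G, G1, G2, pitch_sq, Rpoly3, Rpoly4 in *; simpl. field; lra. Qed.

Lemma tr2_Prest_origin : tr2 (Prest M V 0) = - (Rpoly1 M V / (275625 * V ^ 2 * M ^ 2)).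
Proof. unfold tr2, Prest, dGdx_rest, Ncoef, Rpoly1. field; lra. Qed.

Lemma det2_Prest_origin : det2 (Prest M V 0) = Rpoly2 M V / (689062500 * V ^ 4 * M ^ 4).
Proof. unfold det2, Prest, dGdx_rest, Ncoef, Rpoly2. field; lra. Qed.

Lemma tr2_Prest_pitch (x2 : R) : Rpoly4 M V <> 0 -> x2 ^ 2 = pitch_sq M V ->
  tr2 (Prest M V x2) = Rpoly5 M V * Rpoly4 M V / (275625 * V ^ 2 * M ^ 2 * Rpoly4 M V ^ 2).
Proof.
  intros h4 hx. unfold tr2, Prest, dGdx_rest, Ncoef. rewrite hx.
  unfold pitch_sq, Rpoly3, Rpoly4, Rpoly5 in *. field; lra.
Qed.

Lemma det2_Prest_pitch (x2 : R) : Rpoly4 M V <> 0 -> x2 ^ 2 = pitch_sq M V ->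
  det2 (Prest M V x2) = - (Rpoly6 M V * Rpoly4 M V / (689062500 * V ^ 4 * M ^ 4 * Rpoly4 M V ^ 2)).
Proof.
  intros h4 hx. unfold det2, Prest, dGdx_rest, Ncoef. rewrite hx.
  unfold pitch_sq, Rpoly3, Rpoly4, Rpoly6 in *. field; lra.
Qed.

Lemma jacobi_stable_rest_iff (x1 x2 : R) :
  jacobi_stable M V (x1, x2) <-> tr2 (Prest M V x2) < 0 /\ 0 < det2 (Prest M V x2).
Proof.
  unfold jacobi_stable. rewrite eigenvalue2_Re_neg_iff. unfold tr2, det2. now rewrite !P_rest.
Qed.

Lemma jacobi_stable_origin_iff (x1 : R) : jacobi_stable M V (x1, 0) <-> origin_stable M V.
Proof.
  assert (hk1 : 0 < 275625 * V ^ 2 * M ^ 2) by pos_factors.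
  assert (hk2 : 0 < 689062500 * V ^ 4 * M ^ 4) by pos_factors.
  rewrite jacobi_stable_rest_iff, tr2_Prest_origin, det2_Prest_origin, Rdiv_pos_iff by exact hk2.
  pose proof (Rdiv_pos_iff (Rpoly1 M V) _ hk1).
  unfold origin_stable. split; intros [h h']; split; lra.
Qed.

Lemma jacobi_stable_pitch_iff (x1 x2 : R) : Rpoly4 M V <> 0 -> x2 ^ 2 = pitch_sq M V ->
  jacobi_stable M V (x1, x2) <-> Rpoly5 M V * Rpoly4 M V < 0 /\ Rpoly6 M V * Rpoly4 M V < 0.
Proof.
  intros h4 hx. assert (h4sq : 0 < Rpoly4 M V ^ 2) by now apply pow2_pos.
  assert (hk1 : 0 < 275625 * V ^ 2 * M ^ 2 * Rpoly4 M V ^ 2) by pos_factors.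
  assert (hk2 : 0 < 689062500 * V ^ 4 * M ^ 4 * Rpoly4 M V ^ 2) by pos_factors.
  rewrite jacobi_stable_rest_iff, tr2_Prest_pitch, det2_Prest_pitch, Rdiv_neg_iff by assumption.
  pose proof (Rdiv_neg_iff (Rpoly6 M V * Rpoly4 M V) _ hk2). split; intros [h h']; split; lra.
Qed.

Lemma pitch_sq_pos_iff : Rpoly4 M V <> 0 -> 0 < pitch_sq M V <-> 0 < Rpoly3 M V * Rpoly4 M V.
Proof.
  intros h4. assert (h4sq : 0 < Rpoly4 M V ^ 2) by now apply pow2_pos.
  assert (hk : 0 < M * Rpoly4 M V ^ 2) by pos_factors.
  replace (pitch_sq M V) with (5 * (Rpoly3 M V * Rpoly4 M V) / (M * Rpoly4 M V ^ 2))
    by (unfold pitch_sq; field; split; auto; lra).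
  rewrite Rdiv_pos_iff by exact hk. lra.
Qed.

Lemma fixed_point_iff (x1 x2 : R) : Rpoly4 M V <> 0 ->
  fixed_point M V (x1, x2) <-> x1 = plunge_of_pitch M V x2 /\ (x2 = 0 \/ x2 ^ 2 = pitch_sq M V).
Proof.
  intros h4. unfold fixed_point. rewrite G2_rest, G1_rest by exact h4.
  assert (hV2 : 0 < V ^ 2) by nra.
  split.
  - intros [h1 h2]. rewrite h1 in h2.
    assert (h2' : Rpoly4 M V * x2 * (x2 ^ 2 - pitch_sq M V) / (500 * V ^ 2) = 0) by lra.
    apply Rdiv_eq0_iff in h1; [|lra]. apply Rdiv_eq0_iff in h2'; [|lra].
    split; [lra|]. destruct (Rmult_integral _ _ h2') as [h|h]; [|right; lra].
    destruct (Rmult_integral _ _ h); [contradiction | now left].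
  - intros [-> hx2]. rewrite Rminus_diag, Rmult_0_r, Rdiv_0_l.
    split; [reflexivity|]. destruct hx2 as [-> | ->]; field; lra.
Qed.

Lemma jacobi_stable_fp_iff (x : vec) : Rpoly4 M V <> 0 ->
  jacobi_stable_fp M V x <->
  (x = rest_point M V 0 /\ origin_stable M V) \/
  (pitched_stable M V /\
   (x = rest_point M V (sqrt (pitch_sq M V)) \/ x = rest_point M V (- sqrt (pitch_sq M V)))).
Proof.
  intros h4. destruct x as [x1 x2]. unfold jacobi_stable_fp, rest_point.
  rewrite fixed_point_iff by exact h4. split.
  - intros [[-> hx2] hst]. destruct (Req_dec x2 0) as [-> | hx0].
    + left. split; [reflexivity|]. now apply jacobi_stable_origin_iff in hst.
    + destruct hx2 as [|hx2]; [contradiction|].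
      assert (hs : 0 < pitch_sq M V) by (rewrite <- hx2; now apply pow2_pos).
      right. split.
      * split; [now apply pitch_sq_pos_iff|]. now rewrite jacobi_stable_pitch_iff in hst.
      * apply pow2_eq_iff in hx2 as [-> | ->]; [left | right | lra]; reflexivity.
  - intros [[e hA] | [hB e]].
    + injection e as -> ->. split; [split; [reflexivity | now left]|].
      now apply jacobi_stable_origin_iff.
    + assert (hs : 0 < pitch_sq M V) by now apply pitch_sq_pos_iff, hB.
      assert (hx2 : x2 = sqrt (pitch_sq M V) \/ x2 = - sqrt (pitch_sq M V))
        by (destruct e as [e|e]; injection e; auto).
      assert (hx1 : x1 = plunge_of_pitch M V x2)
        by (destruct e as [e|e]; injection e as -> ->; reflexivity).
      apply pow2_eq_iff in hx2; [|lra]. subst x1.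
      split; [split; [reflexivity | now right]|].
      rewrite jacobi_stable_pitch_iff by assumption. apply hB.
Qed.

Lemma pitched_rest_points_distinct : Rpoly4 M V <> 0 -> pitched_stable M V ->
  let r := sqrt (pitch_sq M V) in
  rest_point M V r <> rest_point M V (- r) /\ rest_point M V r <> rest_point M V 0 /\
  rest_point M V (- r) <> rest_point M V 0.
Proof.
  intros h4 hB r. assert (hr : 0 < r) by (apply sqrt_lt_R0, pitch_sq_pos_iff, hB; exact h4).
  repeat split; intros e; apply rest_point_inj in e; lra.
Qed.

End Airfoil.

Fixpoint horner (cs : list R) (x : R) : R :=
  match cs with
  | [] => 0
  | c :: cs => c + x * horner cs x
  end.

(* [hhorner [c_0; ...; c_n] s t] is the binary form [sum_i c_i s^i t^(n-i)]. *)
Fixpoint hhorner (cs : list R) (s t : R) : R :=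
  match cs with
  | [] => 0
  | c :: cs => c * t ^ length cs + s * hhorner cs s t
  end.

Lemma horner_nonneg (cs : list R) (x : R) :
  Forall (Rle 0) cs -> 0 <= x -> 0 <= horner cs x.
Proof.
  intros Hcs Hx; induction Hcs as [|c cs Hc _ IH]; simpl; [lra|].
  apply Rplus_le_le_0_compat; [exact Hc|]. now apply Rmult_le_pos.
Qed.

Lemma horner_pos (c : R) (cs : list R) (x : R) :
  0 < c -> Forall (Rle 0) cs -> 0 <= x -> 0 < horner (c :: cs) x.
Proof.
  intros Hc Hcs Hx; simpl.
  apply Rplus_lt_le_0_compat; [exact Hc|]. apply Rmult_le_pos; auto using horner_nonneg.
Qed.

Lemma hhorner_nonneg (cs : list R) (s t : R) :
  Forall (Rle 0) cs -> 0 <= s -> 0 <= t -> 0 <= hhorner cs s t.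
Proof.
  intros Hcs Hs Ht; induction Hcs as [|c cs Hc _ IH]; simpl; [lra|].
  apply Rplus_le_le_0_compat; apply Rmult_le_pos; auto using pow_le.
Qed.

Lemma hhorner_pos (c : R) (cs : list R) (s t : R) :
  0 < c -> Forall (Rle 0) cs -> 0 <= s -> 0 < t -> 0 < hhorner (c :: cs) s t.
Proof.
  intros Hc Hcs Hs Ht; simpl.
  apply Rplus_lt_le_0_compat.
  - apply Rmult_lt_0_compat; auto using pow_lt.
  - apply Rmult_le_pos; [exact Hs|]. apply hhorner_nonneg; auto; lra.
Qed.

Definition large_V_cert0 : list R :=
  [30381040653804207037503631410339/11920928955078125000;
   12281351334110902908598454474/11920928955078125; 179012325258034363457655449/953674316406250;
   387858262380650086003498/19073486328125; 4436728490032435285279/3051757812500;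
   10967071043894948459/152587890625; 3047272307375596/1220703125; 2946895292468/48828125;
   15237638931/15625000; 744969/78125; 1341/31250].

Definition large_V_cert : list (list R) :=
  [[8806792212545126036463024292169/2384185791015625000;
    71716352051646819052838189849/2384185791015625; 941861295379741305572129022/95367431640625;
    5582604398624023241108003/3814697265625; 77727083103612847645639/610351562500;
    219108645410375283039/30517578125; 133192954546183617/488281250; 68414288759333/9765625;
    367247119941/3125000; 18253404/15625; 32661/6250];
   [1280390411196700052775890533/3814697265625000; 22009310290415397515090473/76293945312500;
    367728841048434208161979/6103515625000; 370216009733335173853/61035156250;
    691945745949754567/1953125000; 2502490045606001/195312500; 4477315858389/15625000;
    286089507/78125; 63981/3125];
   [11780230389751782206703/6103515625000; 52121852714807346363/61035156250;
    107949419607519357/976562500; 133142725663857/19531250; 714602050419/3125000;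
    319615329/78125; 95301/3125];
   [9303130950564231/2441406250; 44229405376143/48828125; 118689027678/1953125; 141555753/78125;
    126621/6250];
   [49353561621/19531250; 88289019/390625; 157941/31250]].

Definition small_V_cert0 : list R :=
  [843750000000000000000000000000000000000/627087108533643260080674721;
   6750000000000000000000000000000000000000/627087108533643260080674721;
   24469453518750000000000000000000000000000/627087108533643260080674721;
   53040854079053437500000000000000000000000/627087108533643260080674721;
   75349967614017187500000000000000000000000/627087108533643260080674721;
   72105136789155324756187500000000000000000/627087108533643260080674721;
   45665049576821179104964462500000000000000/627087108533643260080674721;
   17527009959477946441366425000000000000000/627087108533643260080674721;
   3052451738272321172534016956332500000000/627087108533643260080674721].

Definition small_V_cert : list (list R) :=
  [[1020881250000000000000000000000000000000000000000/15703331874021591272136865425150399498481;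
    12250575000000000000000000000000000000000000000000/15703331874021591272136865425150399498481;
    67378162500000000000000000000000000000000000000000/15703331874021591272136865425150399498481;
    224614868559221644875000000000000000000000000000000/15703331874021591272136865425150399498481;
    504519423210323022712500000000000000000000000000000/15703331874021591272136865425150399498481;
    801247817550604966200000000000000000000000000000000/15703331874021591272136865425150399498481;
    916895777667108572634982596076875000000000000000000/15703331874021591272136865425150399498481;
    754839712179204730624104734078250000000000000000000/15703331874021591272136865425150399498481;
    437488730149884544970784729238125000000000000000000/15703331874021591272136865425150399498481;
    169866978541680225562767500427453064912300000000000/15703331874021591272136865425150399498481;
    39811736802499672793216159197714636969335000000000/15703331874021591272136865425150399498481;
    4316284481479245895640640135570079201770000000000/15703331874021591272136865425150399498481;
    21524669561672549943025040011045444133402006076/15703331874021591272136865425150399498481];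
   [79983000000000000000000000000000000000000/3138049868823693059154649937911849;
    799830000000000000000000000000000000000000/3138049868823693059154649937911849;
    3599235000000000000000000000000000000000000/3138049868823693059154649937911849;
    9598350653993434567500000000000000000000000/3138049868823693059154649937911849;
    16739834512742647823250000000000000000000000/3138049868823693059154649937911849;
    19807939342593761022000000000000000000000000/3138049868823693059154649937911849;
    15920125116560804278247462665575000000000000/3138049868823693059154649937911849;
    8424787746932649360000673492462500000000000/3138049868823693059154649937911849;
    2716917010093141199267244483937500000000000/3138049868823693059154649937911849;
    446067028359003564942799207186561298246000/3138049868823693059154649937911849;
    20891429461782978973778506876337780902400/3138049868823693059154649937911849];
   [23826150000000000000000000000000/280325037341816388055733;
    166783050000000000000000000000000/280325037341816388055733;
    500349150000000000000000000000000/280325037341816388055733;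
    833935450161362638500000000000000/280325037341816388055733;
    822197650213099238850000000000000/280325037341816388055733;
    465075149671121885550000000000000/280325037341816388055733;
    131466815706863794903018227307500/280325037341816388055733;
    12046957062590535152182394506500/280325037341816388055733];
   [3165570000000000000000/25041707380561; 12662280000000000000000/25041707380561;
    18993420000000000000000/25041707380561; 12661695656180033400000/25041707380561;
    2380679381020862880000/25041707380561];
   [1579410000]].

Lemma horner_horner_pos (c : R) (cs : list R) (css : list (list R)) (x y : R) :
  0 < c -> Forall (Rle 0) cs -> Forall (Forall (Rle 0)) css -> 0 <= x -> 0 <= y ->
  0 < horner (map (fun cs => horner cs y) ((c :: cs) :: css)) x.
Proof.
  intros Hc Hcs Hcss Hx Hy. apply horner_pos; [now apply horner_pos | | exact Hx].
  apply Forall_map. eapply Forall_impl; [|exact Hcss]. intros; now apply horner_nonneg.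
Qed.

Lemma horner_hhorner_pos (c : R) (cs : list R) (css : list (list R)) (x s t : R) :
  0 < c -> Forall (Rle 0) cs -> Forall (Forall (Rle 0)) css -> 0 <= x -> 0 <= s -> 0 < t ->
  0 < horner (map (fun cs => hhorner cs s t) ((c :: cs) :: css)) x.
Proof.
  intros Hc Hcs Hcss Hx Hs Ht. apply horner_pos; [now apply hhorner_pos | | exact Hx].
  apply Forall_map. eapply Forall_impl; [|exact Hcss].
  intros; apply hhorner_nonneg; auto; lra.
Qed.

Ltac nonneg_coeffs := repeat (apply Forall_cons || apply Forall_nil); lra.

(* The coefficients of [Rpoly6] as a polynomial in [Rpoly3 = 50 M - V^2], Taylor-expanded at
   [V = 559/25], which lies just below [sqrt 500]. *)
Lemma Rpoly6_large_V_expansion (M V : R) :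
  Rpoly6 M V = (V ^ 2 - 500) * horner large_V_cert0 (V - 559/25)
    + Rpoly3 M V * horner (map (fun cs => horner cs (V - 559/25)) large_V_cert) (Rpoly3 M V).
Proof. unfold Rpoly6, Rpoly3, large_V_cert0, large_V_cert; cbn [map horner]; field. Qed.

(* The coefficients of [V^10 Rpoly6] as a polynomial in [Rpoly4 = V^2 M - 5000], written as
   binary forms in [V] and [2237/100 - V]; note [(2237/100)^2 > 500]. *)
Lemma Rpoly6_small_V_expansion (M V : R) :
  V ^ 10 * Rpoly6 M V = V ^ 2 * ((500 - V ^ 2) * hhorner small_V_cert0 V (2237/100 - V)
    + Rpoly4 M V * horner (map (fun cs => hhorner cs V (2237/100 - V)) small_V_cert) (Rpoly4 M V)).
Proof.
  unfold Rpoly6, Rpoly4, small_V_cert0, small_V_cert; cbn [map horner hhorner length]; field.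
Qed.

Lemma Rpoly6_pos_large_V (M V : R) : 0 < V -> 500 <= V ^ 2 -> 0 < Rpoly3 M V -> 0 < Rpoly6 M V.
Proof.
  intros hV hV2 h3. assert (hr : 0 <= V - 559/25) by nra.
  rewrite Rpoly6_large_V_expansion. apply Rplus_le_lt_0_compat.
  - apply Rmult_le_pos; [lra|].
    apply horner_nonneg; [unfold large_V_cert0; nonneg_coeffs | exact hr].
  - apply Rmult_lt_0_compat; [exact h3|]. unfold large_V_cert.
    apply horner_horner_pos; auto; try nonneg_coeffs; lra.
Qed.

Lemma Rpoly6_pos_small_V (M V : R) : 0 < V -> V ^ 2 < 500 -> 0 < Rpoly4 M V -> 0 < Rpoly6 M V.
Proof.
  intros hV hV2 h4. assert (ht : 0 < 2237/100 - V) by nra.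
  apply (Rmult_lt_reg_l (V ^ 10)); [now apply pow_lt|].
  rewrite Rmult_0_r, Rpoly6_small_V_expansion.
  apply Rmult_lt_0_compat; [now apply pow_lt|]. apply Rplus_le_lt_0_compat.
  - apply Rmult_le_pos; [lra|].
    apply hhorner_nonneg; [unfold small_V_cert0; nonneg_coeffs | lra | lra].
  - apply Rmult_lt_0_compat; [exact h4|]. unfold small_V_cert.
    apply horner_hhorner_pos; auto; try nonneg_coeffs; lra.
Qed.

Lemma Rpoly6_pos (M V : R) : 0 < V -> 0 < Rpoly3 M V -> 0 < Rpoly4 M V -> 0 < Rpoly6 M V.
Proof.
  intros hV h3 h4. destruct (Rle_lt_dec 500 (V ^ 2)).
  - now apply Rpoly6_pos_large_V.
  - now apply Rpoly6_pos_small_V.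
Qed.

Lemma monomial_mul_nonneg (M V : R) (i j : nat) (X : R) :
  0 <= M -> 0 <= V -> 0 <= X -> 0 <= M ^ i * V ^ j * X.
Proof. intros hM hV hX. apply Rmult_le_pos; [apply Rmult_le_pos|]; auto using pow_le. Qed.

Ltac add_monomial_multiples mono h ijs :=
  lazymatch ijs with
  | [] => idtac
  | (?i, ?j) :: ?rest => pose proof (mono i j _ h); add_monomial_multiples mono h rest
  end.

Lemma Rpoly3_pos (M V : R) :
  0 < M -> 0 < V -> 0 < Rpoly1 M V -> 0 < Rpoly2 M V -> 0 < Rpoly3 M V.
Proof.
  intros hM hV h1 h2. apply Rnot_le_lt; intros h3.
  assert (hu : 0 <= V ^ 2 - 50 * M) by (unfold Rpoly3 in h3; lra).
  set (u := V ^ 2 - 50 * M) in hu.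
  pose proof (fun i j X => monomial_mul_nonneg M V i j X (Rlt_le _ _ hM) (Rlt_le _ _ hV)) as mono.
  assert (hp : 0 <= Rpoly1 M V) by lra. assert (hq : 0 <= Rpoly2 M V) by lra.
  assert (hu2 : 0 <= u ^ 2) by apply pow2_ge_0.
  assert (hp2 : 0 <= Rpoly1 M V ^ 2) by apply pow2_ge_0.
  (* A Positivstellensatz certificate: lra finds a nonnegative combination of these products,
     together with [0 < M], [0 <= u] and [0 < Rpoly1 M V], that is identically negative. *)
  add_monomial_multiples mono (Rmult_le_pos _ _ hu2 hp) [(1,0); (1,1); (1,2)]%nat.
  add_monomial_multiples mono hu2 [(0,0); (0,2); (0,3); (1,0); (1,1); (1,3); (2,1); (2,4);
                                   (3,0); (3,1); (3,2); (3,3); (3,4)]%nat.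
  add_monomial_multiples mono (Rmult_le_pos _ _ hu hp2) [(0,0); (0,1); (0,2)]%nat.
  add_monomial_multiples mono (Rmult_le_pos _ _ hu hp)
    [(0,0); (0,1); (0,2); (0,3); (0,4); (1,0); (1,1); (2,3); (2,4)]%nat.
  add_monomial_multiples mono (Rmult_le_pos _ _ hu hq) [(0,1)]%nat.
  add_monomial_multiples mono hu [(0,1); (0,3); (1,0)]%nat.
  add_monomial_multiples mono hp2 [(0,0); (0,3); (0,4); (1,0)]%nat.
  add_monomial_multiples mono hp [(0,1); (0,2); (0,4); (0,5); (3,4)]%nat.
  add_monomial_multiples mono hq [(1,2); (1,3); (1,4)]%nat.
  clear mono. unfold u, Rpoly1, Rpoly2 in *. lra.
Qed.

Lemma stability_sign_conditions (r1 r2 r3 r4 r5 r6 : R) :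
  r1 <> 0 -> r2 <> 0 -> r3 <> 0 -> r4 <> 0 -> r5 <> 0 -> r6 <> 0 ->
  (0 < r1 -> 0 < r2 -> 0 < r3) -> (0 < r3 -> 0 < r4 -> 0 < r6) ->
  let A := 0 < r1 /\ 0 < r2 in
  let B := 0 < r3 * r4 /\ r5 * r4 < 0 /\ r6 * r4 < 0 in
  (A /\ ~ B <->
     (r1 > 0 /\ r2 > 0 /\ r4 > 0 /\ r5 > 0 /\ r6 > 0)
  \/ (r1 > 0 /\ r2 > 0 /\ r3 > 0 /\ r4 < 0)
  \/ (r1 > 0 /\ r2 > 0 /\ r3 > 0 /\ r4 > 0 /\ r5 < 0 /\ r6 > 0))
  /\
  (~ A /\ B <->
     (r1 < 0 /\ r3 < 0 /\ r4 < 0 /\ r5 > 0 /\ r6 > 0)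
  \/ (r1 > 0 /\ r2 < 0 /\ r3 < 0 /\ r4 < 0 /\ r5 > 0 /\ r6 > 0)).
Proof.
  intros h1 h2 h3 h4 h5 h6 H3 H6 A B. unfold A, B, Rgt. rewrite Rmult_pos_iff, !Rmult_neg_iff.
  destruct (Rsign_cases r1 h1), (Rsign_cases r2 h2), (Rsign_cases r3 h3),
    (Rsign_cases r4 h4), (Rsign_cases r5 h5), (Rsign_cases r6 h6); tauto.
Qed.

Theorem theorem4p2 (M V : R) (hM : 0 < M) (hV : 0 < V)
  (hgen : (M - 10) * Rpoly1 M V * Rpoly2 M V * Rpoly3 M V * Rpoly4 M V * Rpoly5 M V * Rpoly6 M V <> 0) :
  (exactly_one (jacobi_stable_fp M V) <->
     (Rpoly1 M V > 0 /\ Rpoly2 M V > 0 /\ Rpoly4 M V > 0 /\ Rpoly5 M V > 0 /\ Rpoly6 M V > 0)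
  \/ (Rpoly1 M V > 0 /\ Rpoly2 M V > 0 /\ Rpoly3 M V > 0 /\ Rpoly4 M V < 0)
  \/ (Rpoly1 M V > 0 /\ Rpoly2 M V > 0 /\ Rpoly3 M V > 0 /\ Rpoly4 M V > 0 /\ Rpoly5 M V < 0 /\ Rpoly6 M V > 0))
  /\
  (exactly_two (jacobi_stable_fp M V) <->
     (Rpoly1 M V < 0 /\ Rpoly3 M V < 0 /\ Rpoly4 M V < 0 /\ Rpoly5 M V > 0 /\ Rpoly6 M V > 0)
  \/ (Rpoly1 M V > 0 /\ Rpoly2 M V < 0 /\ Rpoly3 M V < 0 /\ Rpoly4 M V < 0 /\ Rpoly5 M V > 0 /\ Rpoly6 M V > 0)).
Proof.
  repeat match goal with H : _ * _ <> 0 |- _ => apply Rmult_neq_0_reg in H as [H ?] end.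
  assert (h4 : Rpoly4 M V <> 0) by assumption.
  pose proof (jacobi_stable_fp_iff M V hM hV) as Hfp.
  pose proof (pitched_rest_points_distinct M V hM h4) as Hdistinct.
  rewrite (exactly_one_cases _ _ _ _ _ _ Hdistinct (fun x => Hfp x h4)),
          (exactly_two_cases _ _ _ _ _ _ Hdistinct (fun x => Hfp x h4)).
  apply stability_sign_conditions; auto using Rpoly3_pos, Rpoly6_pos.
Qed.
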